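(* Fix a dimension $d\ge1$ and a constant $c\ge 1$. The intersection graph of any $n$ objects in $\mathbb{R}^d$ forming a $c$-fat collection admits a $3$-hop spanner of size $O(n\log n)$, where the constant in the $O(\cdot)$ depends only on $d$ and $c$.
   Context: Objects are bounded subsets of $\mathbb{R}^d$. The side length of an object is the side length of its smallest enclosing axis-aligned hypercube. A collection of objects is $c$-fat if for every axis-aligned hypercube $\gamma$ with side length $\ell$, there exist $c$ points that together hit (i.e., lie in) all objects of the collection that intersect $\gamma$ and have side length at least $\ell$. The intersection graph has the objects as vertices, with an edge between two objects iff they intersect. For a graph $G$ and integer $t\ge1$, a $t$-hop spanner is a subgraph $\widehat{G}$ of $G$ on the same vertex set such that for every edge $uv\in E(G)$ there is a $u$–$v$ path in $\widehat{G}$ with at most $t$ edges; its size is its number of edges. *)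

From HB Require Import structures.
From mathcomp Require Import all_boot all_order all_algebra.
From mathcomp Require Import all_classical all_reals all_analysis.
Set Implicit Arguments. Unset Strict Implicit. Unset Printing Implicit Defensive.
Import Order.TTheory GRing.Theory Num.Theory.
Local Open Scope classical_set_scope.
Local Open Scope ring_scope.

Definition pt (R : realType) (d : nat) := 'I_d -> R.

Definition cube (R : realType) (d : nat) (a : pt R d) (l : R) : set (pt R d) :=
  [set x | forall k : 'I_d, a k <= x k <= a k + l].

Definition bounded_obj (R : realType) (d : nat) (O : set (pt R d)) : Prop :=
  exists M : R, forall x, O x -> forall k : 'I_d, `|x k| <= M.

(* Side length: side of the smallest enclosing axis-aligned hypercube
   (infimum of sides of enclosing hypercubes; attained for bounded nonempty
   sets; 0 for the empty set). *)
Definition sidelen (R : realType) (d : nat) (O : set (pt R d)) : R :=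
  inf [set l : R | 0 <= l /\ exists a : pt R d, O `<=` cube a l].

Definition fat_collection (R : realType) (d c n : nat) (O : 'I_n -> set (pt R d)) : Prop :=
  forall (a : pt R d) (l : R), 0 <= l ->
    exists p : 'I_c -> pt R d,
      forall i : 'I_n, O i `&` cube a l !=set0 -> l <= sidelen (O i) ->
        exists j : 'I_c, O i (p j).

Definition igraph_edge (R : realType) (d n : nat) (O : 'I_n -> set (pt R d))
  (u v : 'I_n) : Prop := u != v /\ O u `&` O v !=set0.

(* A subgraph given by a set S of (oriented) edges; adjacency is symmetric.
   Its number of (undirected) edges is at most #|S|. *)
Definition sadj (n : nat) (S : {set 'I_n * 'I_n}) : rel 'I_n :=
  fun u v => ((u, v) \in S) || ((v, u) \in S).

Definition hop_spanner (R : realType) (d n : nat) (O : 'I_n -> set (pt R d))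
  (t : nat) (S : {set 'I_n * 'I_n}) : Prop :=
  (forall u v : 'I_n, (u, v) \in S -> igraph_edge O u v) /\
  (forall u v : 'I_n, igraph_edge O u v ->
     exists s : seq 'I_n, (size s <= t)%N /\ path (sadj S) u s /\ last u s = v).

(* Every object u is given a level lev u, the dyadic grid level whose cells have side comparable
   to the side length of u, and is replaced by 5^d "copies": the cells of that level around a
   point of u, which together cover u.  The spanner is built by divide and conquer over the tree
   of dyadic cells.  For a set X of copies, pick a cell C containing more than |X|/(2^d+1) of
   them while each child of C contains at most that many.  By fatness, the objects of level at
   least that of C which meet C are stabbed by c points (plus one more point for the objects of
   size 0).  For every stabbing point, join each object to one neighbour through that point and
   join a hub to all objects through it: these O(c|X|) edges give 3-hop paths for all edges at
   such a large object.  Any other edge is witnessed either inside C by copies of smaller level,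
   or outside C by copies not in C; each of these two sets holds at most a 2^d/(2^d+1) fraction
   of X, so recursion depth O(2^d (d + log n)) suffices and the spanner has O(n log n) edges. *)

From HB Require Import structures.
From mathcomp Require Import all_boot all_order all_algebra.
From mathcomp Require Import all_classical all_reals all_analysis.
From mathcomp Require Import zify ring lra.
Import Order.TTheory GRing.Theory Num.Theory.
Local Open Scope classical_set_scope.
Local Open Scope ring_scope.
Set Implicit Arguments. Unset Strict Implicit. Unset Printing Implicit Defensive.

Section SideLength.
Variables (R : realType) (d : nat).

Lemma sidelen_ge0 (U : set (pt R d)) : 0 <= sidelen U.
Proof.
rewrite /sidelen.
have [[l hl]|empty] :=
  pselect ([set l : R | 0 <= l /\ exists a, U `<=` cube a l] !=set0).
- by apply: lb_le_inf => [|l' []]; first exists l.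
- suff -> : [set l : R | 0 <= l /\ exists a : pt R d, U `<=` cube a l] = set0.
    by rewrite inf0.
  by apply/seteqP; split=> l //= hl; apply: empty; exists l.
Qed.

Lemma sidelen_dist (U : set (pt R d)) x y i : bounded_obj U ->
  U x -> U y -> `|x i - y i| <= sidelen U.
Proof.
move=> [M hM] Ux Uy; apply: lb_le_inf.
  exists (2 * `|M|); split; first by rewrite mulr_ge0.
  exists (fun _ => - `|M|) => z Uz k /=.
  have := hM z Uz k; have := ler_norm M; rewrite ler_norml => h1 /andP[h2 h3].
  apply/andP; split; lra.
move=> l [_ [a sub]].
have /andP[h1 h2] := sub x Ux i; have /andP[h3 h4] := sub y Uy i.
rewrite ler_norml; apply/andP; split; lra.
Qed.

End SideLength.

Section Floor.
Variable R : realType.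
Implicit Types a b : R.

Lemma floor_half_bounds a :
  2 * Num.floor (a / 2) <= Num.floor a <= 2 * Num.floor (a / 2) + 1.
Proof.
have h1 := floor_le (a / 2); have h2 := floorD1_gt (a / 2).
rewrite intrD in h2.
apply/andP; split; first by rewrite floor_ge_int intrM; lra.
by rewrite -ltzD1 floor_lt_int !intrD intrM; lra.
Qed.

Lemma eq_floor_half a b :
  Num.floor a = Num.floor b -> Num.floor (a / 2) = Num.floor (b / 2).
Proof. by move=> e; have := floor_half_bounds a; have := floor_half_bounds b; lia. Qed.

Lemma eq_floor_dist a b : Num.floor a = Num.floor b -> `|a - b| < 1.
Proof.
move=> e; have := floor_le a; have := floorD1_gt a.
have := floor_le b; have := floorD1_gt b.
rewrite e intrD => h1 h2 h3 h4; rewrite ltr_norml; apply/andP; split; lra.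
Qed.

Lemma floor_le_dist a b (k : int) :
  `|a - b| < k%:~R -> Num.floor a <= Num.floor b + k.
Proof.
move=> hab; rewrite -ltzD1 floor_lt_int.
have := floor_le a; have := floorD1_gt b; rewrite !intrD => h1 h2.
by move: hab; rewrite ltr_norml => /andP[h3 h4]; lra.
Qed.

End Floor.

Lemma card_bigcup_le (I T : finType) (F : I -> {set T}) :
  (#|(\bigcup_(i : I) F i)%SET| <= \sum_(i : I) #|F i|)%N.
Proof.
apply: (big_ind2 (fun (A : {set T}) (k : nat) => #|A| <= k)%N) => [|A1 k1 A2 k2 h1 h2|//].
  by rewrite cards0.
by apply: leq_trans (leq_card_setU _ _) _; apply: leq_add.
Qed.

Section DyadicGrid.
Variables (R : realType) (d : nat) (o h : R).

Definition cell_side (l : nat) : R := h * 2 ^+ l.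

Definition cell_idx (l : nat) (x : pt R d) (i : 'I_d) : int :=
  Num.floor ((x i - o) / cell_side l).

Definition same_cell (l : nat) (x y : pt R d) : Prop :=
  forall i, cell_idx l x i = cell_idx l y i.

Definition cell_corner (l : nat) (y : pt R d) : pt R d :=
  fun i => o + (cell_idx l y i)%:~R * cell_side l.

Lemma cell_side0 : cell_side 0 = h.
Proof. by rewrite /cell_side expr0 mulr1. Qed.

Lemma cell_sideS l : cell_side l.+1 = cell_side l * 2.
Proof. by rewrite /cell_side exprSr mulrA. Qed.

Lemma cell_idxS l x i : cell_idx l.+1 x i = Num.floor ((x i - o) / cell_side l / 2).
Proof. by rewrite /cell_idx cell_sideS invfM mulrA. Qed.

Lemma same_cell_sym l x y : same_cell l x y -> same_cell l y x.
Proof. by move=> e i; rewrite e. Qed.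

Lemma same_cell_trans l x y z : same_cell l x y -> same_cell l y z -> same_cell l x z.
Proof. by move=> e1 e2 i; rewrite e1 e2. Qed.

Lemma same_cell_le l j x y : (l <= j)%N -> same_cell l x y -> same_cell j x y.
Proof.
move=> /subnK <-; elim: (j - l)%N => [|k IH] // e i.
by rewrite addSn !cell_idxS; apply: eq_floor_half; apply: IH.
Qed.

Lemma cell_idx_child l x i :
  (cell_idx l x i - 2 * cell_idx l.+1 x i \in [:: 0; 1])%R.
Proof.
rewrite cell_idxS; have := floor_half_bounds ((x i - o) / cell_side l).
by rewrite !inE -/(cell_idx l x i); lia.
Qed.

Hypothesis h_gt0 : 0 < h.

Lemma cell_side_gt0 l : 0 < cell_side l.
Proof. by rewrite mulr_gt0 // exprn_gt0. Qed.

Lemma ler_cell_side l j : (l <= j)%N -> cell_side l <= cell_side j.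
Proof. by move=> lj; rewrite ler_pM2l // ler_eXn2l // ltr1n. Qed.

Lemma same_cell_dist l x y i : same_cell l x y -> `|x i - y i| < cell_side l.
Proof.
move=> /(_ i) /eq_floor_dist; rewrite -mulrBl opprB addrA subrK normrM.
rewrite [`|_^-1|]gtr0_norm ?invr_gt0 ?cell_side_gt0 //.
by rewrite ltr_pdivrMr ?cell_side_gt0 // mul1r.
Qed.

Lemma same_cell_cube l x y : same_cell l x y -> cube (cell_corner l y) (cell_side l) x.
Proof.
move=> e i; rewrite /cell_corner -e; have s0 := cell_side_gt0 l.
have h1 := floor_le ((x i - o) / cell_side l).
have h2 := floorD1_gt ((x i - o) / cell_side l).
rewrite -/(cell_idx l x i) in h1 h2; rewrite intrD in h2.
rewrite ler_pdivlMr // in h1; rewrite ltr_pdivrMr // in h2.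
apply/andP; split; lra.
Qed.

Definition shift_pt (l : nat) (b : pt R d) (e : {ffun 'I_d -> 'I_5}) : pt R d :=
  fun i => b i + ((e i)%:R - 2) * cell_side l.

Lemma cell_idx_shift l b e i :
  cell_idx l (shift_pt l b e) i = cell_idx l b i + (e i)%:Z - 2.
Proof.
rewrite /cell_idx /shift_pt addrAC mulrDl mulfK ?gt_eqF ?cell_side_gt0 //.
have -> : ((e i)%:R - 2 : R) = ((e i)%:Z - 2)%:~R by rewrite intrB.
by rewrite floorDrz ?intr_int // intrKfloor addrA.
Qed.

Lemma near_cells_cover l b x : (forall i, `|x i - b i| < 2 * cell_side l) ->
  exists e : {ffun 'I_d -> 'I_5}, same_cell l x (shift_pt l b e).
Proof.
move=> hx.
suff /fin_all_exists [f hf] :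
    forall i, exists k : 'I_5, cell_idx l x i = cell_idx l b i + (k : nat)%:Z - 2.
  by exists (finfun f) => i; rewrite cell_idx_shift ffunE hf.
move=> i; have s0 := cell_side_gt0 l.
have dist : `|(x i - o) / cell_side l - (b i - o) / cell_side l| < (2%:Z)%:~R.
  rewrite -mulrBl opprB addrA subrK normrM [`|_^-1|]gtr0_norm ?invr_gt0 //.
  by rewrite ltr_pdivrMr.
have f1 := floor_le_dist dist; rewrite distrC in dist.
have f2 := floor_le_dist dist.
rewrite -/(cell_idx l x i) -/(cell_idx l b i) in f1 f2.
have k5 : (absz (cell_idx l x i - cell_idx l b i + 2)%R < 5)%N by lia.
by exists (Ordinal k5) => /=; lia.
Qed.

Lemma same_cell0_eq (x y : pt R d) :
  (forall i, 0 < `|x i - y i| -> h <= `|x i - y i|) -> same_cell 0 x y -> x = y.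
Proof.
move=> sep xy; apply: funext => i; apply/eqP; rewrite -subr_eq0 -normr_eq0.
have := same_cell_dist i xy; rewrite cell_side0.
by rewrite eq_le normr_ge0 andbT leNgt; apply: contraTN => /sep; rewrite leNgt => /negbTE ->.
Qed.

End DyadicGrid.

Section Walks.
Variable n : nat.
Implicit Types (S : {set 'I_n * 'I_n}) (u v a b : 'I_n).

Definition adj_or_eq S a b := a = b \/ sadj S a b.

Definition walk3 S u v :=
  exists x1 x2, [/\ adj_or_eq S u x1, adj_or_eq S x1 x2 & adj_or_eq S x2 v].

Lemma adj_or_eq_sym S a b : adj_or_eq S a b -> adj_or_eq S b a.
Proof. by rewrite /adj_or_eq /sadj orbC; case=> [->|]; [left|right]. Qed.

Lemma walk3_sym S u v : walk3 S u v -> walk3 S v u.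
Proof. by move=> [x1 [x2 [h1 h2 h3]]]; exists x2, x1; split; apply: adj_or_eq_sym. Qed.

Lemma adj_or_eq_subset S S' a b : S \subset S' -> adj_or_eq S a b -> adj_or_eq S' a b.
Proof.
move=> /fintype.subsetP sub [->|ab]; [by left|right].
by case/orP: ab => /sub ab; rewrite /sadj ab ?orbT.
Qed.

Lemma walk3_subset S S' u v : S \subset S' -> walk3 S u v -> walk3 S' u v.
Proof.
by move=> sub [x1 [x2 [h1 h2 h3]]]; exists x1, x2; split; apply: adj_or_eq_subset sub _.
Qed.

Lemma adj_or_eq_path S a b s : adj_or_eq S a b -> path (sadj S) b s ->
  exists s', [/\ (size s' <= (size s).+1)%N, path (sadj S) a s' & last a s' = last b s].
Proof.
case=> [->|ab] ps; first by exists s; split.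
by exists (b :: s); split => //=; rewrite ab.
Qed.

Lemma walk3_path S u v : walk3 S u v ->
  exists s, (size s <= 3)%N /\ path (sadj S) u s /\ last u s = v.
Proof.
move=> [x1 [x2 [h1 h2 h3]]].
have [s3 [z3 p3 l3]] := adj_or_eq_path (s := [::]) h3 erefl.
have [s2 [z2 p2 l2]] := adj_or_eq_path h2 p3.
have [s1 [z1 p1 l1]] := adj_or_eq_path h1 p2.
exists s1; split; last by split => //; rewrite l1 l2 l3.
by apply: leq_trans z1 _; apply: leq_trans z2 _; apply: leq_trans z3 _.
Qed.

End Walks.

Lemma igraph_edge_sym (R : realType) (d n : nat) (O : 'I_n -> set (pt R d)) u v :
  igraph_edge O u v -> igraph_edge O v u.
Proof. by case=> uv [x [Ou Ov]]; split; [rewrite eq_sym | exists x]. Qed.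

Section Spanner.
Variables (R : realType) (d c n : nat) (O : 'I_n -> set (pt R d)).
Hypothesis fatO : fat_collection c O.
Variables (o h : R) (lev : 'I_n -> nat) (b : 'I_n -> pt R d).
Hypothesis h_gt0 : 0 < h.
Hypothesis lev_side_le :
  forall u, 0 < sidelen (O u) -> cell_side h (lev u) <= sidelen (O u).
Hypothesis lev_sidelen0 : forall u, sidelen (O u) = 0 -> lev u = 0%N.
Hypothesis sidelen0_sep : forall u w x y, O u x -> O w y ->
  sidelen (O u) = 0 -> sidelen (O w) = 0 -> same_cell o h 0 x y -> x = y.

Local Notation cell := (same_cell o h).
Local Notation copy := ('I_n * {ffun 'I_d -> 'I_5})%type.
Implicit Types (X : {set copy}) (S : {set 'I_n * 'I_n}).

(* The copy (u, e) is the cell of level lev u at offset e - 2 from the cell of the anchor b u;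
   it is represented by the point copy_pt (u, e) of that cell. *)
Definition copy_pt (P : copy) : pt R d := shift_pt h (lev P.1) (b P.1) P.2.

Definition in_copy (P : copy) (x : pt R d) : Prop := cell (lev P.1) x (copy_pt P).

Definition cell_copies (X : {set copy}) (j : nat) (y : pt R d) : {set copy} :=
  [set P in X | (lev P.1 <= j)%N && `[< cell j (copy_pt P) y >]].

Definition big_at (j : nat) (y : pt R d) (w : 'I_n) : Prop :=
  (j <= lev w)%N /\ exists2 z, O w z & cell j z y.

Definition sub_igraph (S : {set 'I_n * 'I_n}) : Prop :=
  forall u v, (u, v) \in S -> igraph_edge O u v.

Definition covers (X : {set copy}) (S : {set 'I_n * 'I_n}) : Prop :=
  forall (P Q : copy) x, P \in X -> Q \in X -> igraph_edge O P.1 Q.1 ->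
    O P.1 x -> O Q.1 x -> in_copy P x -> in_copy Q x -> walk3 S P.1 Q.1.

Lemma sub_igraph0 : sub_igraph finset.set0.
Proof. by move=> u v; rewrite inE. Qed.

Lemma sub_igraphU S1 S2 : sub_igraph S1 -> sub_igraph S2 -> sub_igraph (S1 :|: S2).
Proof. by move=> h1 h2 u v; rewrite inE => /orP[/h1|/h2]. Qed.

Lemma covers_card_le1 X : (#|X| <= 1)%N -> covers X finset.set0.
Proof.
move=> X1 P Q x PX QX [PQ _]; exfalso.
have : (1 < #|X|)%N by apply/card_gt1P; exists P, Q; split => //; apply: contraNneq PQ => ->.
by rewrite ltnNge X1.
Qed.

Lemma in_copy_cell P x j y : in_copy P x -> (lev P.1 <= j)%N ->
  cell j (copy_pt P) y -> cell j x y.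
Proof. by move=> xP Pj; apply: same_cell_trans; apply: same_cell_le Pj xP. Qed.

Lemma cell_stabbing j y : exists p : option 'I_c -> pt R d,
  forall w, big_at j y w -> exists k, O w (p k).
Proof.
have [p hp] := fatO (cell_corner o h j y) (ltW (cell_side_gt0 h_gt0 j)).
(* Fatness only speaks of objects of positive size; all objects of size 0 that meet a cell of
   side h are the same point, which serves as one extra stabbing point. *)
have [q hq] : exists q, forall w z, j = 0%N -> sidelen (O w) = 0 -> O w z -> cell j z y -> z = q.
  have [[w0 [z0 [j0 sw0 Oz0 z0y]]]|none] :=
    pselect (exists w z, [/\ j = 0%N, sidelen (O w) = 0, O w z & cell j z y]).
    exists z0 => w z _ sw Oz zy; apply: (sidelen0_sep Oz Oz0 sw sw0).
    by rewrite -j0; apply: same_cell_trans zy (same_cell_sym z0y).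
  by exists y => w z j0 sw Oz zy; exfalso; apply: none; exists w, z.
exists (fun k => if k is Some k then p k else q) => w [jw [z Oz zy]].
have [sw|sw] := eqVneq (sidelen (O w)) 0.
  have j0 : j = 0%N by move: jw; rewrite lev_sidelen0 // leqn0 => /eqP.
  by exists None; rewrite -(hq w z).
have sw_gt0 : 0 < sidelen (O w) by rewrite lt_neqAle eq_sym sw sidelen_ge0.
have meet : O w `&` cube (cell_corner o h j y) (cell_side h j) !=set0.
  by exists z; split => //; apply: same_cell_cube.
have [k Opk] := hp w meet (le_trans (ler_cell_side h_gt0 jw) (lev_side_le sw_gt0)).
by exists (Some k).
Qed.

(* Descend from a heavy cell into heavy children for as long as possible. *)
Lemma centroid_cell X (N k : nat) j y : (N < k * #|cell_copies X j y|)%N ->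
  exists j' y', (N < k * #|cell_copies X j' y'|)%N /\
    forall z, (0 < j')%N -> cell j' z y' -> (k * #|cell_copies X j'.-1 z| <= N)%N.
Proof.
elim: j y => [|j IH] y hN; first by exists 0%N, y.
have [[z [_ hz]]|small] := pselect (exists z, cell j.+1 z y /\ (N < k * #|cell_copies X j z|)%N).
  exact: IH hz.
exists j.+1, y; split => // z _ zy; rewrite leqNgt; apply/negP => hz.
by apply: small; exists z.
Qed.

Section Star.
Variables (X : {set copy}) (j : nat) (y : pt R d) (p : option 'I_c -> pt R d).
Hypothesis p_stabs : forall w, big_at j y w -> exists k, O w (p k).

Definition objs : {set 'I_n} := [set P.1 | P in X].

Definition bigs k : {set 'I_n} :=
  [set w in objs | `[< big_at j y w >] && `[< O w (p k) >]].

Definition hub k : option 'I_n := [pick w in bigs k].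

Definition link k u : option 'I_n := [pick a in bigs k | `[< igraph_edge O u a >]].

(* Star k links every object to one neighbour among the big objects through p k, and a hub to
   all of those; pairs produced by a failed pick are loops and are discarded. *)
Definition star_pairs k : {set 'I_n * 'I_n} :=
  [set (u, odflt u (link k u)) | u in objs] :|: [set (odflt w (hub k), w) | w in bigs k].

Definition star_edges : {set 'I_n * 'I_n} :=
  [set e in (\bigcup_(k : option 'I_c) star_pairs k)%SET | e.1 != e.2].

Lemma bigs_stab k w : w \in bigs k -> O w (p k).
Proof. by rewrite inE => /and3P[_ _ /asboolP]. Qed.

Lemma card_objs : (#|objs| <= #|X|)%N.
Proof. exact: leq_imset_card. Qed.

Lemma card_bigs k : (#|bigs k| <= #|X|)%N.
Proof.
apply: leq_trans card_objs; apply: subset_leq_card; apply/fintype.subsetP => w.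
by rewrite inE => /andP[].
Qed.

Lemma star_edges_sub_igraph : sub_igraph star_edges.
Proof.
move=> u v; rewrite inE => /andP[/bigcupP[k _]].
rewrite /star_pairs inE => /orP[] /imsetP[w wk [-> ->]] /=.
  by rewrite /link; case: pickP => [a /andP[_ /asboolP ? _] // | _]; rewrite eqxx.
rewrite /hub; case: pickP => [z zk zw | _]; last by rewrite eqxx.
by split => //; exists (p k); split; apply: bigs_stab.
Qed.

Lemma card_star_edges : (#|star_edges| <= 2 * c.+1 * #|X|)%N.
Proof.
have card_pairs k : (#|star_pairs k| <= 2 * #|X|)%N.
  apply: leq_trans (leq_card_setU _ _) _; rewrite mul2n -addnn.
  apply: leq_add; apply: leq_trans (leq_imset_card _ _) _; [exact: card_objs | exact: card_bigs].
have sub : star_edges \subset (\bigcup_(k : option 'I_c) star_pairs k)%SET.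
  by apply/fintype.subsetP => e; rewrite inE => /andP[].
apply: leq_trans (subset_leq_card sub) _; apply: leq_trans (card_bigcup_le _) _.
apply: (@leq_trans (\sum_(k : option 'I_c) 2 * #|X|)%N).
  by apply: leq_sum => k _; apply: card_pairs.
by rewrite sum_nat_const card_option card_ord; lia.
Qed.

Lemma star_edges_walk3 u w : big_at j y w -> u \in objs -> w \in objs ->
  igraph_edge O u w -> walk3 star_edges u w.
Proof.
move=> bw uX wX uw; have [k Opk] := p_stabs bw.
have wk : w \in bigs k by rewrite inE wX /=; apply/andP; split; apply/asboolP.
case hz : (hub k) => [z|]; last by move: hz; rewrite /hub; case: pickP => // /(_ w); rewrite wk.
case ha : (link k u) => [a|]; last first.
  by move: ha; rewrite /link; case: pickP => // /(_ w); rewrite wk; move/asboolP: uw => ->.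
have [ak ua] : a \in bigs k /\ igraph_edge O u a.
  by move: ha; rewrite /link; case: pickP => // a' /andP[? /asboolP ?] [<-].
have zk : z \in bigs k by move: hz; rewrite /hub; case: pickP => // z' ? [<-].
have star_mem v v' : (v, v') \in star_pairs k -> v != v' -> sadj star_edges v v'.
  by move=> vk ne; apply/orP; left; rewrite inE /= ne andbT; apply/bigcupP; exists k.
exists a, z; split.
- right; apply: star_mem; last by case: ua.
  by rewrite inE; apply/orP; left; apply/imsetP; exists u => //; rewrite ha.
- have [<-|az] := eqVneq a z; [by left | right; rewrite /sadj orbC].
  apply: star_mem; last by rewrite eq_sym.
  by rewrite inE; apply/orP; right; apply/imsetP; exists a => //; rewrite hz.
- have [<-|zw] := eqVneq z w; [by left | right].
  apply: star_mem => //.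
  by rewrite inE; apply/orP; right; apply/imsetP; exists w => //; rewrite hz.
Qed.

End Star.

Section Step.
Variables (X : {set copy}) (j : nat) (y : pt R d).

Definition inner : {set copy} :=
  [set P in X | (lev P.1 < j)%N && `[< cell j (copy_pt P) y >]].

Definition outer : {set copy} :=
  [set P in X | (P \notin cell_copies X j y) && ~~ `[< big_at j y P.1 >]].

Lemma inner_sub_cell : inner \subset cell_copies X j y.
Proof. by apply/fintype.subsetP => P; rewrite !inE => /andP[-> /andP[/ltnW -> ->]]. Qed.

Lemma card_outer_cell : (#|outer| + #|cell_copies X j y| <= #|X|)%N.
Proof.
have CX : cell_copies X j y \subset X by apply/fintype.subsetP => P; rewrite inE => /andP[].
rewrite -(cardsID (cell_copies X j y) X) (finset.setIidPr CX) addnC leq_add2l.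
by apply/subset_leq_card/fintype.subsetP => P; rewrite !inE => /andP[-> /andP[-> _]].
Qed.

Lemma inner_mem P x : P \in X -> O P.1 x -> in_copy P x -> cell j x y ->
  ~ big_at j y P.1 -> P \in inner.
Proof.
move=> PX Px xP xy nbP.
have Pj : (lev P.1 < j)%N by rewrite ltnNge; apply/negP => jP; apply: nbP; split => //; exists x.
rewrite inE PX Pj /=; apply/asboolP.
exact: same_cell_trans (same_cell_sym (same_cell_le (ltnW Pj) xP)) xy.
Qed.

Lemma outer_mem P x : P \in X -> in_copy P x -> ~ cell j x y ->
  ~ big_at j y P.1 -> P \in outer.
Proof.
move=> PX xP nxy nbP; rewrite inE PX /=; apply/andP; split; last exact/asboolP.
by rewrite inE PX /=; apply/negP => /andP[Pj /asboolP Py]; apply: nxy; apply: in_copy_cell Py.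
Qed.

Definition child (be : {ffun 'I_d -> bool}) : {set copy} :=
  [set P in inner | [forall i,
     cell_idx o h j.-1 (copy_pt P) i == 2 * cell_idx o h j (copy_pt P) i + (be i : nat)%:Z]].

Lemma inner_sub_children : (0 < j)%N ->
  inner \subset (\bigcup_(be : {ffun 'I_d -> bool}) child be)%SET.
Proof.
move=> j_gt0; apply/fintype.subsetP => P PIn; apply/bigcupP.
exists [ffun i => cell_idx o h j.-1 (copy_pt P) i - 2 * cell_idx o h j (copy_pt P) i == 1] => //.
rewrite inE PIn; apply/forallP => i; rewrite ffunE.
have := cell_idx_child o h j.-1 (copy_pt P) i; rewrite prednK // !inE.
by case/orP => /eqP e; rewrite e /=; apply/eqP; lia.
Qed.

Lemma child_sub_cell be P0 : P0 \in child be ->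
  child be \subset cell_copies X j.-1 (copy_pt P0).
Proof.
rewrite inE => /andP[P0In /forallP P0be]; apply/fintype.subsetP => P.
rewrite inE => /andP[PIn /forallP Pbe].
move: P0In PIn; rewrite !inE => /and3P[_ _ /asboolP P0y] /and3P[PX Pj /asboolP Py].
rewrite PX -ltnS (leq_trans Pj (leqSpred j)) /=; apply/asboolP => i.
by rewrite (eqP (Pbe i)) (eqP (P0be i)) Py P0y.
Qed.

Lemma card_inner :
  (forall z, (0 < j)%N -> cell j z y -> ((2 ^ d).+1 * #|cell_copies X j.-1 z| <= #|X|)%N) ->
  ((2 ^ d).+1 * #|inner| <= 2 ^ d * #|X|)%N.
Proof.
move=> small; have [j0|j_gt0] := posnP j.
  suff -> : inner = finset.set0 by rewrite cards0 muln0.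
  by apply/setP => P; rewrite !inE j0 ltn0 andbF.
have card_child be : ((2 ^ d).+1 * #|child be| <= #|X|)%N.
  have [->|[P0 P0be]] := set_0Vmem (child be); first by rewrite cards0 muln0.
  have P0y : cell j (copy_pt P0) y.
    by move: P0be; rewrite !inE => /andP[/and3P[_ _ /asboolP]].
  apply: leq_trans (small _ j_gt0 P0y); rewrite leq_mul2l.
  by rewrite (subset_leq_card (child_sub_cell P0be)) orbT.
apply: (@leq_trans ((2 ^ d).+1 * \sum_(be : {ffun 'I_d -> bool}) #|child be|)).
  rewrite leq_mul2l (leq_trans (subset_leq_card (inner_sub_children j_gt0))) ?orbT //.
  exact: card_bigcup_le.
rewrite big_distrr; apply: (@leq_trans (\sum_(be : {ffun 'I_d -> bool}) #|X|)).
  by apply: leq_sum => be _; apply: card_child.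
by rewrite sum_nat_const card_ffun card_bool card_ord.
Qed.

Lemma covers_split S0 S1 S2 :
  (forall u w, big_at j y w -> u \in objs X -> w \in objs X -> igraph_edge O u w ->
     walk3 S0 u w) ->
  covers inner S1 -> covers outer S2 -> covers X (S0 :|: S1 :|: S2).
Proof.
move=> star cov1 cov2 P Q x PX QX PQ Px Qx xP xQ.
have sub0 : S0 \subset S0 :|: S1 :|: S2 by rewrite -finset.setUA finset.subsetUl.
have sub1 : S1 \subset S0 :|: S1 :|: S2 by rewrite -finset.setUA finset.setUCA finset.subsetUl.
have sub2 : S2 \subset S0 :|: S1 :|: S2 by rewrite finset.subsetUr.
have objP : P.1 \in objs X by apply: imset_f.
have objQ : Q.1 \in objs X by apply: imset_f.
have [bP|nbP] := pselect (big_at j y P.1).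
  by apply/walk3_sym/(walk3_subset sub0)/star => //; apply: igraph_edge_sym.
have [bQ|nbQ] := pselect (big_at j y Q.1); first exact/(walk3_subset sub0)/star.
have [xy|nxy] := pselect (cell j x y).
  by apply/(walk3_subset sub1)/(cov1 _ _ x) => //; apply: inner_mem xy _.
by apply/(walk3_subset sub2)/(cov2 _ _ x) => //; apply: outer_mem nxy _.
Qed.

End Step.

Variables (J : nat) (y0 : pt R d).
Hypothesis root_cell : forall P : copy, (lev P.1 <= J)%N /\ cell J (copy_pt P) y0.

Lemma cell_copies_root X : cell_copies X J y0 = X.
Proof.
apply/setP => P; rewrite inE andb_idr // => _.
by have [-> PJ] := root_cell P; apply/asboolP.
Qed.

Lemma spanner_rec D X : (#|X| * (2 ^ d) ^ D <= (2 ^ d).+1 ^ D)%N ->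
  exists S, [/\ sub_igraph S, covers X S & (#|S| <= 2 * c.+1 * #|X| * D)%N].
Proof.
elim: D X => [|D IH] X hX.
  exists finset.set0; split; [exact: sub_igraph0 | apply: covers_card_le1 | by rewrite cards0].
  by move: hX; rewrite !expn0 muln1.
have [X1|X2] := leqP #|X| 1.
  by exists finset.set0; split; [exact: sub_igraph0 | exact: covers_card_le1 | rewrite cards0].
have hroot : (#|X| < (2 ^ d).+1 * #|cell_copies X J y0|)%N.
  by rewrite cell_copies_root; move: hX; rewrite !expnS; nia.
have [j [y [hbig small]]] := centroid_cell hroot.
have [p p_stabs] := cell_stabbing j y.
have hin := card_inner small; have hout := card_outer_cell X j y.
have hio : (#|inner X j y| + #|outer X j y| <= #|X|)%N.
  by apply: leq_trans hout; rewrite addnC leq_add2l subset_leq_card ?inner_sub_cell.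
move: hX hin hbig; rewrite !expnS.
set m := (2 ^ d)%N; set a := (m ^ D)%N; set a' := (m.+1 ^ D)%N => hX hin hbig.
have hin' : (#|inner X j y| * a <= a')%N by nia.
have hout' : (#|outer X j y| * a <= a')%N by nia.
have [S1 [sub1 cov1 card1]] := IH _ hin'.
have [S2 [sub2 cov2 card2]] := IH _ hout'.
exists (star_edges X j y p :|: S1 :|: S2); split.
- by apply/sub_igraphU => //; apply/sub_igraphU => //; apply: star_edges_sub_igraph.
- exact: covers_split (star_edges_walk3 p_stabs) cov1 cov2.
- have := leq_mul (leq_mul (leqnn (2 * c.+1)) hio) (leqnn D).
  have := card_star_edges X j y p.
  have := (leq_card_setU (star_edges X j y p :|: S1) S2).1.
  have := (leq_card_setU (star_edges X j y p) S1).1; nia.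
Qed.

End Spanner.

Section RealAux.
Variable R : realType.

Lemma sumr_ge_term (I : finType) (F : I -> R) i : (forall j, 0 <= F j) -> F i <= \sum_j F j.
Proof. by move=> F0; rewrite (bigD1 i) //= lerDl sumr_ge0. Qed.

Lemma exists_pos_lb (I : finType) (f : I -> R) :
  exists2 h, 0 < h & forall i, 0 < f i -> h <= f i.
Proof.
pose g i := if 0 < f i then (f i)^-1 else 0.
have g0 i : 0 <= g i by rewrite /g; case: ifP => // fi; rewrite invr_ge0 ltW.
have s0 : 0 < 1 + \sum_i g i by apply: ltr_pwDl => //; exact: sumr_ge0.
exists (1 + \sum_i g i)^-1 => [|i fi]; first by rewrite invr_gt0.
rewrite -[f i]invrK lef_pV2 ?posrE ?invr_gt0 //.
have <- : g i = (f i)^-1 by rewrite /g fi.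
by apply: le_trans (sumr_ge_term i g0) _; rewrite lerDr.
Qed.

Lemma exists_level (h s : R) : 0 < h -> h <= s ->
  exists l, cell_side h l <= s < cell_side h l.+1.
Proof.
move=> h_gt0 hs.
have ex : exists l, cell_side h l <= s by exists 0%N; rewrite cell_side0.
have bd l : cell_side h l <= s -> (l <= Num.bound (s / h))%N.
  move=> hl; rewrite -(ler_nat R); apply/ltW/(le_lt_trans _ (archi_boundP _)).
    rewrite ler_pdivlMr //; apply: le_trans hl; rewrite /cell_side mulrC ler_pM2l //.
    by rewrite -natrX ler_nat ltnW // ltn_expl.
  by rewrite divr_ge0 ?ltW // (lt_le_trans h_gt0).
have [l hl hmax] := ex_maxnP ex bd.
by exists l; rewrite hl ltNge; apply/negP => /hmax; rewrite ltnn.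
Qed.

Lemma exists_levels (I : finType) (s : I -> R) (h : R) : 0 < h ->
  (forall i, 0 < s i -> h <= s i) ->
  exists lev : I -> nat, forall i, [/\ s i < 2 * cell_side h (lev i),
    0 < s i -> cell_side h (lev i) <= s i & s i = 0 -> lev i = 0%N].
Proof.
move=> h_gt0 h_le.
suff lev_i i : exists l, [/\ s i < 2 * cell_side h l, 0 < s i -> cell_side h l <= s i &
    s i = 0 -> l = 0%N] by exact: fin_all_exists lev_i.
have [s_gt0|s_le0] := ltP 0 (s i); last first.
  exists 0%N; split => //.
  by apply: le_lt_trans s_le0 _; rewrite mulr_gt0 // cell_side_gt0.
have [l /andP[l1 l2]] := exists_level h_gt0 (h_le _ s_gt0).
by exists l; split => [|//|s0]; [rewrite mulrC -cell_sideS | move: s_gt0; rewrite s0 ltxx].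
Qed.

Lemma exists_root_cell (d : nat) (I : finType) (q : I -> pt R d) (h : R) (L : nat) : 0 < h ->
  exists o J y0, (L <= J)%N /\ forall i, same_cell o h J (q i) y0.
Proof.
move=> h_gt0.
pose B : R := 1 + \sum_i \sum_k `|q i k|.
have B1 : 1 <= B by rewrite lerDl; do 2 apply: sumr_ge0 => ? _.
have qB i k : `|q i k| + 1 <= B.
  rewrite addrC lerD2l; apply: le_trans (sumr_ge_term i _) => [|i']; last exact: sumr_ge0.
  exact: (sumr_ge_term k (F := fun k => `|q i k|)).
have [K hK] : exists K : nat, 2 * B / h < K%:R.
  by exists (Num.bound (2 * B / h)); apply: archi_boundP; rewrite divr_ge0 ?ltW //; lra.
have B_lt : 2 * B < cell_side h (L + K).
  apply: lt_le_trans (ler_cell_side h_gt0 (leq_addl L K)).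
  move: hK; rewrite ltr_pdivrMr // /cell_side => /lt_le_trans; apply.
  by rewrite mulrC ler_pM2l // -natrX ler_nat ltnW // ltn_expl.
have idx0 z k : `|z k| + 1 <= B -> cell_idx (- B) h (L + K) z k = 0.
  move=> zB; apply: floor_def; rewrite add0r.
  have s_gt0 := cell_side_gt0 h_gt0 (L + K).
  have := ler_norm (z k); have : - z k <= `|z k| by rewrite -normrN ler_norm.
  move=> z1 z2; apply/andP; split; first by rewrite divr_ge0 ?ltW //; lra.
  by rewrite ltr_pdivrMr // mul1r; lra.
exists (- B), (L + K)%N, (fun _ => 0); split => [|i k]; first exact: leq_addr.
by rewrite !idx0 // normr0 add0r.
Qed.

End RealAux.

Section Build.
Variables (R : realType) (d c n : nat) (O : 'I_n -> set (pt R d)).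
Hypothesis bdO : forall i, bounded_obj (O i).
Hypothesis fatO : fat_collection c O.

Lemma sidelen0_eq u x y : O u x -> O u y -> sidelen (O u) = 0 -> x = y.
Proof.
move=> Ox Oy s0; apply: funext => i; apply/eqP; rewrite -subr_eq0 -normr_eq0 eq_le normr_ge0.
by rewrite -s0 sidelen_dist.
Qed.

Lemma spanner_of_depth D : (n * 5 ^ d * (2 ^ d) ^ D <= (2 ^ d).+1 ^ D)%N ->
  exists S, [/\ sub_igraph O S, forall u v, igraph_edge O u v -> walk3 S u v &
    (#|S| <= 2 * c.+1 * (n * 5 ^ d) * D)%N].
Proof.
move=> hD.
have [b bO] : exists b : 'I_n -> pt R d, forall u, O u !=set0 -> O u (b u).
  suff b_u u : exists x, O u !=set0 -> O u x by exact: fin_all_exists b_u.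
  by have [[x Ox]|nO] := pselect (O u !=set0); [exists x | exists (fun=> 0) => /nO].
pose gaps (t : 'I_n + 'I_n * 'I_n * 'I_d) : R :=
  if t is inr (u, w, i) then `|b u i - b w i| else if t is inl u then sidelen (O u) else 0.
have [h h_gt0 h_le] := exists_pos_lb gaps.
have [lev hlev] := exists_levels h_gt0 (fun u => h_le (inl u)).
have [orig [J [y0 [levJ root]]]] := exists_root_cell (copy_pt h lev b) (\max_u lev u) h_gt0.
have sep u w x y : O u x -> O w y -> sidelen (O u) = 0 -> sidelen (O w) = 0 ->
    same_cell orig h 0 x y -> x = y.
  move=> Ox Oy su sw; rewrite (sidelen0_eq Ox (bO u (ex_intro _ x Ox)) su).
  rewrite (sidelen0_eq Oy (bO w (ex_intro _ y Oy)) sw).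
  by apply: same_cell0_eq => // i; apply: (h_le (inr (u, w, i))).
have root_cell P : (lev P.1 <= J)%N /\ same_cell orig h J (copy_pt h lev b P) y0.
  by split; [apply: leq_trans levJ; apply: leq_bigmax | apply: root].
have hX : (#|[set: 'I_n * {ffun 'I_d -> 'I_5}]%SET| * (2 ^ d) ^ D <= (2 ^ d).+1 ^ D)%N.
  by rewrite cardsT card_prod card_ffun !card_ord.
have lev_le u : 0 < sidelen (O u) -> cell_side h (lev u) <= sidelen (O u).
  by have [] := hlev u.
have lev0 u : sidelen (O u) = 0 -> lev u = 0%N by have [] := hlev u.
have [S [subS covS cardS]] := spanner_rec fatO h_gt0 lev_le lev0 sep root_cell hX.
exists S; split => //; last first.
  by move: cardS; rewrite cardsT card_prod card_ffun !card_ord.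
move=> u v uv; have [_ [x [Oux Ovx]]] := uv.
have in_some_copy w z : O w z -> exists e, in_copy orig h lev b (w, e) z.
  move=> Oz; have near_b i : `|z i - b w i| < 2 * cell_side h (lev w).
    apply: le_lt_trans (sidelen_dist i (bdO w) Oz (bO w (ex_intro _ z Oz))) _.
    by have [] := hlev w.
  by have [e ze] := near_cells_cover orig h_gt0 near_b; exists e.
have [eu xu] := in_some_copy u x Oux; have [ev xv] := in_some_copy v x Ovx.
by apply: (covS (u, eu) (v, ev) x); rewrite ?inE.
Qed.

End Build.

Lemma expn_bernoulli (m k : nat) : (m ^ k * (m + k) <= m.+1 ^ k * m)%N.
Proof.
elim: k => [|k IH]; first by rewrite !expn0 addn0.
by rewrite !expnS; move: IH; set a := (m ^ k)%N; set a' := (m.+1 ^ k)%N; nia.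
Qed.

Lemma expn_succ_ge (m : nat) : (0 < m)%N -> (2 * m ^ m <= m.+1 ^ m)%N.
Proof. by move=> m_gt0; have := expn_bernoulli m m; set a := (m ^ m)%N; nia. Qed.

(* With m = 2^d, each block of m levels of recursion gains a factor (1 + 1/m)^m >= 2, and
   3d + log n + 1 blocks absorb the n 5^d copies. *)
Lemma depth_enough (n d : nat) (D := (2 ^ d * (3 * d + trunc_log 2 n + 1))%N) :
  (n * 5 ^ d * (2 ^ d) ^ D <= (2 ^ d).+1 ^ D)%N.
Proof.
have five_le k : (5 ^ k <= 8 ^ k)%N by elim: k => // k IH; rewrite !expnS leq_mul.
rewrite /D; set m := (2 ^ d)%N; set D' := (3 * d + trunc_log 2 n + 1)%N.
have hn : (n * 5 ^ d <= 2 ^ D')%N.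
  rewrite /D' -addnA expnD mulnC expnM; apply: leq_mul; first exact: five_le.
  by rewrite addn1 ltnW // trunc_log_ltn.
rewrite !expnM; apply: (@leq_trans ((2 * m ^ m) ^ D')).
  by rewrite expnMn leq_mul2r hn orbT.
by rewrite leq_exp2r ?expn_succ_ge ?expn_gt0 // /D' addn1.
Qed.

Lemma ln_depth_le (R : realType) (n d l : nat) (a : R) : (2 <= n)%N -> (2 ^ l <= n)%N ->
  0 <= a -> a * n%:R * (3 * d + l + 1)%:R <= a * (3 * d + 2)%:R / ln 2 * n%:R * ln n%:R.
Proof.
move=> n2 ln_n a0.
have ln2_gt0 : 0 < ln (2 : R) by apply: ln_gt0; rewrite ltr1n.
have n_gt0 : (0 : R) < n%:R by rewrite ltr0n; lia.
have ln2_le : ln (2 : R) <= ln n%:R by rewrite ler_ln ?posrE ?ltr0n // ?ler_nat; lia.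
have lln2_le : l%:R * ln (2 : R) <= ln n%:R.
  rewrite mulr_natl -lnXn // ler_ln ?posrE ?exprn_gt0 //.
  by rewrite -natrX ler_nat.
have key : (3 * d + l + 1)%:R <= (3 * d + 2)%:R / ln 2 * ln (n%:R : R).
  rewrite mulrAC ler_pdivlMr // !natrD.
  have : (0 : R) <= d%:R by []; nra.
rewrite [X in _ <= X](_ : _ = (a * n%:R) * ((3 * d + 2)%:R / ln 2 * ln (n%:R : R))); last by ring.
by rewrite ler_wpM2l // mulr_ge0 // ltW.
Qed.

Theorem theorem11 (R : realType) (d c : nat) :
  (1 <= d)%N -> (1 <= c)%N ->
  exists K : R, 0 < K /\
    forall (n : nat) (O : 'I_n -> set (pt R d)),
      (forall i, bounded_obj (O i)) ->
      fat_collection c O ->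
      exists S : {set 'I_n * 'I_n},
        hop_spanner O 3 S /\ (#|S|%:R <= K * n%:R * ln n%:R).
Proof.
move=> _ _; pose a : R := (2 * c.+1 * 5 ^ d * 2 ^ d)%N%:R.
have a_gt0 : 0 < a by rewrite ltr0n !muln_gt0 !expn_gt0.
exists (a * (3 * d + 2)%:R / ln 2); split.
  by rewrite divr_gt0 ?ln_gt0 ?ltr1n // mulr_gt0 // ltr0n addn_gt0 orbT.
move=> n O bdO fatO; have [n_le1|n_ge2] := leqP n 1.
  exists finset.set0; split; last first.
    have [->|->] : n = 0%N \/ n = 1%N by lia.
      by rewrite cards0 mulr0 mul0r.
    by rewrite cards0 ln1 mulr0.
  split=> [u v|u v [uv _]]; first by rewrite inE.
  suff uv' : u = v by rewrite uv' eqxx in uv.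
  by apply: ord_inj; have := ltn_ord u; have := ltn_ord v; lia.
have [S [subS walkS cardS]] := spanner_of_depth bdO fatO (depth_enough n d).
exists S; split; first by split=> // u v /walkS /walk3_path.
apply: le_trans _ (ln_depth_le d n_ge2 (trunc_logP (leqnn 2) (ltnW n_ge2)) (ltW a_gt0)).
by rewrite -!natrM ler_nat; apply: leq_trans cardS _; nia.
Qed.
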